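(* Let $q_1, q_2$ be real numbers with $0< q_1, q_2 \leq 1$ and let $m,n$ be integers such that $q_1m$ and $q_2n$ are integers. If $H$ is a connected signed bipartite graph, then $$z(m, n, H) \geq \frac{1}{2\max\{q_1, q_2\}}\, z(q_1m, q_2n, H).$$
   Context: A signed bipartite graph is a bipartite graph with a proper vertex 2-colouring by $+$ and $-$. $z(m,n,H)$ is the maximum number of edges in a signed bipartite graph with $+$ class of size $m$ and $-$ class of size $n$ containing no copy of $H$ with $+$ vertices mapped into the $+$ class and $-$ vertices into the $-$ class. *)

From mathcomp Require Import all_boot all_order all_algebra.
Set Implicit Arguments. Unset Strict Implicit. Unset Printing Implicit Defensive.

(* A signed bipartite graph with + class 'I_a and - class 'I_b is given by
   its edge set EH : {set 'I_a * 'I_b} (edges only go between + and -). *)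

Definition sb_adj (a b : nat) (EH : {set 'I_a * 'I_b}) : rel ('I_a + 'I_b) :=
  fun u v => match u, v with
  | inl i, inr j => (i, j) \in EH
  | inr j, inl i => (i, j) \in EH
  | _, _ => false
  end.

Definition sb_connected (a b : nat) (EH : {set 'I_a * 'I_b}) : Prop :=
  forall u v : 'I_a + 'I_b, connect (sb_adj EH) u v.

Definition has_copyb (a b m n : nat) (EH : {set 'I_a * 'I_b})
  (E : {set 'I_m * 'I_n}) : bool :=
  [exists f : {ffun 'I_a -> 'I_m}, exists g : {ffun 'I_b -> 'I_n},
    [&& injectiveb f, injectiveb g &
        [forall i, forall j, ((i, j) \in EH) ==> ((f i, g j) \in E)]]].

Definition zex (a b : nat) (EH : {set 'I_a * 'I_b}) (m n : nat) : nat :=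
  \max_(E : {set 'I_m * 'I_n} | ~~ has_copyb EH E) #|E|.

From mathcomp Require Import all_boot all_order all_algebra.
From mathcomp Require Import lra.
Set Implicit Arguments. Unset Strict Implicit. Unset Printing Implicit Defensive.

(* Place t = min(m %/ k, n %/ l) disjoint copies of an extremal H-free graph on
   k + l vertices along the diagonal of the m x n host.  As H is connected, a
   copy of H in the blow-up stays inside one diagonal block, hence reduces to a
   copy in the original graph; so z(m, n, H) >= t z(k, l, H).  Since
   m %/ k = floor(1 / q1) >= 1 / (2 q1) (and likewise for n, l), the factor t
   is at least 1 / (2 max(q1, q2)). *)

Lemma sb_connected_const (a b : nat) (EH : {set 'I_a * 'I_b}) (T : eqType)
    (h : 'I_a + 'I_b -> T) :
  sb_connected EH -> (forall u v, sb_adj EH u v -> h u = h v) ->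
  forall u v, h u = h v.
Proof.
move=> connH adj_h u v.
have closed_h : closed (sb_adj EH) [pred w | h w == h u].
  by move=> x y /adj_h; rewrite !inE => ->.
by have := closed_connect closed_h (connH u v); rewrite !inE eqxx => /esym/eqP.
Qed.

Section ExtremalNumber.

Variables (a b : nat) (EH : {set 'I_a * 'I_b}).

Lemma zex_ge (m n : nat) (E : {set 'I_m * 'I_n}) :
  ~~ has_copyb EH E -> #|E| <= zex EH m n.
Proof. by move=> freeE; rewrite /zex (leq_bigmax_cond E). Qed.

Lemma zex_witness (m n : nat) :
  0 < zex EH m n ->
  exists2 E : {set 'I_m * 'I_n}, ~~ has_copyb EH E & #|E| = zex EH m n.
Proof.
rewrite /zex; case: (pickP (fun E : {set 'I_m * 'I_n} => ~~ has_copyb EH E)).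
  move=> E0 freeE0 _; exists [arg max_(E > E0 | ~~ has_copyb EH E) #|E|].
    by case: arg_maxnP.
  by rewrite (bigmax_eq_arg E0).
by move=> no_free; rewrite big_pred0.
Qed.

Lemma zex_gt0_dims (m n : nat) : 0 < zex EH m n -> 0 < m /\ 0 < n.
Proof.
move=> zex_gt0; have [E _ cardE] := zex_witness zex_gt0.
move: zex_gt0; rewrite -cardE => /card_gt0P [[i j] _].
by split; [apply: leq_ltn_trans (ltn_ord i) | apply: leq_ltn_trans (ltn_ord j)].
Qed.

End ExtremalNumber.

Definition block_diag (k l m n : nat) (E : {set 'I_k * 'I_l}) : {set 'I_m * 'I_n} :=
  [set p : 'I_m * 'I_n | (p.1 %/ k == p.2 %/ l) &&
     [exists e in E, (p.1 %% k == e.1) && (p.2 %% l == e.2)]].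

Lemma block_lt (k t m c r : nat) : c < t -> r < k -> t * k <= m -> c * k + r < m.
Proof.
move=> lt_ct lt_rk le_tkm; apply: leq_trans le_tkm.
have: c.+1 * k <= t * k by rewrite leq_mul2r lt_ct orbT.
by apply: leq_trans; rewrite mulSnr ltn_add2l.
Qed.

Section BlockDiagonal.

Variables (k l : nat) (E : {set 'I_k * 'I_l}).

Lemma card_block_diag (t m n : nat) :
  t * k <= m -> t * l <= n -> t * #|E| <= #|block_diag m n E|.
Proof.
move=> le_tkm le_tln.
pose place (x : 'I_t * ('I_k * 'I_l)) : 'I_m * 'I_n :=
  (Ordinal (block_lt (ltn_ord x.1) (ltn_ord x.2.1) le_tkm),
   Ordinal (block_lt (ltn_ord x.1) (ltn_ord x.2.2) le_tln)).
have block_divK d c r : r < d -> (c * d + r) %/ d = c.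
  by move=> lt_rd; rewrite divnMDl ?divn_small ?addn0 //; apply: leq_ltn_trans lt_rd.
have block_modK d c r : r < d -> (c * d + r) %% d = r.
  by move=> lt_rd; rewrite modnMDl modn_small.
have inj_place : injective place.
  move=> [c [r s]] [c' [r' s']] [eq_kr eq_ls].
  have eq_c : c = c'.
    by apply: val_inj => /=; rewrite -(block_divK k c r) // eq_kr block_divK.
  have eq_r : r = r'.
    by apply: val_inj => /=; rewrite -(block_modK k c r) // eq_kr block_modK.
  have eq_s : s = s'.
    by apply: val_inj => /=; rewrite -(block_modK l c s) // eq_ls block_modK.
  by rewrite eq_c eq_r eq_s.
rewrite -[t in t * _](card_ord t) -cardsT -cardsX -(card_imset _ inj_place).
apply/subset_leq_card/subsetP => _ /imsetP [[c [r s]] /setXP [_ Ers] ->].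
rewrite inE /= !block_divK // eqxx /=; apply/exists_inP; exists (r, s) => //=.
by rewrite !block_modK ?eqxx.
Qed.

Hypotheses (k_gt0 : 0 < k) (l_gt0 : 0 < l).

Lemma block_diag_free (a b m n : nat) (EH : {set 'I_a * 'I_b}) :
  sb_connected EH -> ~~ has_copyb EH E -> ~~ has_copyb EH (block_diag m n E).
Proof.
move=> connH; apply: contra => /existsP [f /existsP [g]].
case/and3P=> /injectiveP inj_f /injectiveP inj_g /forallP copyE.
have edge_f_g i j : (i, j) \in EH -> (f i, g j) \in block_diag m n E.
  exact: implyP (forallP (copyE i) j).
pose block (u : 'I_a + 'I_b) := match u with inl i => f i %/ k | inr j => g j %/ l end.
have block_const : forall u v, block u = block v.
  apply: (sb_connected_const (h := block) connH) => -[i|j] [i'|j'] //= ij;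
    by have /edge_f_g := ij; rewrite inE => /andP [/eqP].
have divmod_inj x y d : x %/ d = y %/ d -> x %% d = y %% d -> x = y.
  by move=> eq_div eq_mod; rewrite (divn_eq x d) (divn_eq y d) eq_div eq_mod.
apply/existsP; exists [ffun i => Ordinal (ltn_pmod (f i) k_gt0)].
apply/existsP; exists [ffun j => Ordinal (ltn_pmod (g j) l_gt0)].
apply/and3P; split.
- apply/injectiveP => i i'; rewrite !ffunE => -[eq_mod]; apply/inj_f/val_inj.
  exact: divmod_inj (block_const (inl i) (inl i')) eq_mod.
- apply/injectiveP => j j'; rewrite !ffunE => -[eq_mod]; apply/inj_g/val_inj.
  exact: divmod_inj (block_const (inr j) (inr j')) eq_mod.
apply/forallP => i; apply/forallP => j; apply/implyP => /edge_f_g.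
rewrite inE => /andP [_ /exists_inP [[r s] Ers /andP [/eqP eq_r /eqP eq_s]]].
by rewrite !ffunE; congr (_ \in E): Ers; congr pair; apply: val_inj.
Qed.

End BlockDiagonal.

Lemma zex_blowup (a b : nat) (EH : {set 'I_a * 'I_b}) (t k l m n : nat) :
  sb_connected EH -> t * k <= m -> t * l <= n -> t * zex EH k l <= zex EH m n.
Proof.
move=> connH le_tkm le_tln.
have [->|zex_gt0] := posnP (zex EH k l); first by rewrite muln0.
have [k_gt0 l_gt0] := zex_gt0_dims zex_gt0.
have [E freeE <-] := zex_witness zex_gt0.
apply: leq_trans (card_block_diag E le_tkm le_tln) (zex_ge _).
exact: block_diag_free.
Qed.

Import Order.TTheory GRing.Theory Num.Theory.
Local Open Scope ring_scope.

Lemma floor_ratio_ge (R : realFieldType) (q : R) (m k : nat) :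
  0 < q -> q <= 1 -> q * m%:R = k%:R -> (0 < k)%N -> 1 <= 2 * q * (m %/ k)%:R.
Proof.
move=> q_gt0 q_le1 qm_k k_gt0; set T := (m %/ k)%N.
have le_km : (k <= m)%N by rewrite -(ler_nat R) -qm_k ler_piMl.
have T_ge1 : 1 <= T%:R :> R by rewrite ler1n divn_gt0.
have m_gt0 : 0 < m%:R :> R by rewrite ltr0n (leq_trans k_gt0).
have : m%:R < (T%:R + 1) * (q * m%:R) :> R.
  by rewrite qm_k natr1 -natrM ltr_nat ltn_ceil.
rewrite mulrA -{1}[m%:R]mul1r ltr_pM2r // => lt1_Tq.
nra.
Qed.

Theorem lemma4p2 (R : realFieldType) (q1 q2 : R) (m n k l : nat)
  (a b : nat) (EH : {set 'I_a * 'I_b}) :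
  0 < q1 -> q1 <= 1 -> 0 < q2 -> q2 <= 1 ->
  q1 * m%:R = k%:R -> q2 * n%:R = l%:R ->
  sb_connected EH ->
  (zex EH k l)%:R / (2 * Num.max q1 q2) <= (zex EH m n)%:R.
Proof.
move=> q1_gt0 q1_le1 q2_gt0 q2_le1 q1m_k q2n_l connH.
have [->|zex_gt0] := posnP (zex EH k l); first by rewrite mul0r.
have [k_gt0 l_gt0] := zex_gt0_dims zex_gt0.
set M := Num.max q1 q2; set t := minn (m %/ k) (n %/ l).
have M_gt0 : 0 < M by rewrite lt_max q1_gt0.
have raise_q q T : q <= M -> 1 <= 2 * q * T%:R -> 1 <= 2 * M * T%:R.
  by move=> le_qM /le_trans; apply; rewrite ler_wpM2r // ler_wpM2l.
have t_ge : 1 <= 2 * M * t%:R.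
  have [le_mn|lt_nm] := leqP (m %/ k) (n %/ l).
  - rewrite /t (minn_idPl le_mn); apply: (raise_q q1); last exact: floor_ratio_ge.
    by rewrite le_max lexx.
  - rewrite /t (minn_idPr (ltnW lt_nm)); apply: (raise_q q2); last exact: floor_ratio_ge.
    by rewrite le_max lexx orbT.
have blowup : (t * zex EH k l <= zex EH m n)%N.
  apply: zex_blowup connH _ _.
  - by apply: leq_trans (leq_divM m k); rewrite leq_mul2r geq_minl orbT.
  - by apply: leq_trans (leq_divM n l); rewrite leq_mul2r geq_minr orbT.
rewrite ler_pdivrMr ?mulr_gt0 //.
apply: le_trans (_ : (zex EH k l)%:R * (2 * M * t%:R) <= _); first by rewrite ler_peMr.
rewrite [2 * M * _]mulrC mulrA -natrM ler_wpM2r ?ler_nat 1?mulnC //.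
by rewrite mulr_ge0 // ltW.
Qed.
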